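(* Let $\kappa$ be an infinite cardinal, let $(A,B,C)\in S\setminus B_0$ where $B_0=\{(X,\,X\cap Z,\,Z): X,Z\in\mathcal{F}(\kappa),\ X\sim Z\}$, and let $(A',B',C')$ be a complement of $(A,B,C)$ in $S$. If $B\subseteq A$, then $B'\not\subseteq A'$.
   Context: $\mathcal{F}(\kappa)$ is the Boolean lattice of subsets $X\subseteq\kappa$ that are finite or cofinite. For $X,Z\in\mathcal{F}(\kappa)$, $X\sim Z$ means that either both $X,Z$ are finite or both $\kappa\setminus X,\kappa\setminus Z$ are finite. Let $\mu(A,B,C)=(A\cap B)\cup(A\cap C)\cup(B\cap C)$; a triple is balanced if $A\cap B=A\cap C=B\cap C$. $S$ is the set of balanced triples $(A,B,C)\in\mathcal{F}(\kappa)^3$ with $C\setminus\mu(A,B,C)$ finite, ordered componentwise; it is a bounded lattice with componentwise meet, join $(A,B,C)\vee(A',B',C')=(U_1\cup m,U_2\cup m,U_3\cup m)$ where $U_1=A\cup A'$, $U_2=B\cup B'$, $U_3=C\cup C'$, $m=\mu(U_1,U_2,U_3)$, and bounds $(\emptyset,\emptyset,\emptyset)$, $(\kappa,\kappa,\kappa)$. A complement of $x$ in $S$ is $y\in S$ with $x\wedge y$ the least and $x\vee y$ the greatest element. (In the paper the set $B_0$ is called $B$.) *)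

From mathcomp Require Import all_boot.
From mathcomp Require Import boolp classical_sets cardinality.
Set Implicit Arguments. Unset Strict Implicit. Unset Printing Implicit Defensive.
Local Open Scope classical_set_scope.

(* The infinite cardinal kappa is modelled by an infinite type T;
   subsets of kappa are [set T]. *)

Definition finco (T : Type) (X : set T) : Prop :=
  finite_set X \/ finite_set (~` X).

Definition simF (T : Type) (X Z : set T) : Prop :=
  (finite_set X /\ finite_set Z) \/ (finite_set (~` X) /\ finite_set (~` Z)).

Definition mu (T : Type) (A B C : set T) : set T :=
  (A `&` B) `|` (A `&` C) `|` (B `&` C).

Definition balanced (T : Type) (A B C : set T) : Prop :=
  A `&` B = A `&` C /\ A `&` C = B `&` C.

Definition triple (T : Type) := (set T * set T * set T)%type.

Definition inS (T : Type) (x : triple T) : Prop :=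
  let: (A, B, C) := x in
  [/\ finco A, finco B, finco C, balanced A B C & finite_set (C `\` mu A B C)].

Definition inB0 (T : Type) (x : triple T) : Prop :=
  exists X Z : set T, [/\ finco X, finco Z, simF X Z & x = (X, X `&` Z, Z)].

Definition meetS (T : Type) (x y : triple T) : triple T :=
  let: (A, B, C) := x in let: (A', B', C') := y in
  (A `&` A', B `&` B', C `&` C').

Definition joinS (T : Type) (x y : triple T) : triple T :=
  let: (A, B, C) := x in let: (A', B', C') := y in
  let U1 := A `|` A' in let U2 := B `|` B' in let U3 := C `|` C' in
  let m := mu U1 U2 U3 in
  (U1 `|` m, U2 `|` m, U3 `|` m).

Definition botS (T : Type) : triple T := (set0, set0, set0).
Definition topS (T : Type) : triple T := (setT, setT, setT).

Definition complS (T : Type) (x y : triple T) : Prop :=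
  [/\ inS y, meetS x y = botS T & joinS x y = topS T].

(** Since [B ⊆ A] and the triple is balanced, [B = A ∩ C]; so the triple
    would lie in [B_0] if [A ~ C], and it does not.  As [B ⊆ A] and [C] is
    [B] up to a finite set, [A] finite would force [C] finite, hence
    [A ~ C]; therefore [A] is cofinite and [C] is finite.  The meet condition
    [A ∩ A' = ∅] then makes [B' ⊆ A'] finite, and [C'] is again [B'] up to a
    finite set.  But the middle component of the join is covered by
    [B ∪ B' ∪ C ∪ C'], a finite set, so it cannot be all of [κ]. *)

From mathcomp Require Import all_boot.
From mathcomp Require Import boolp classical_sets cardinality.
Set Implicit Arguments. Unset Strict Implicit. Unset Printing Implicit Defensive.
Local Open Scope classical_set_scope.

Section BalancedTriples.
Variables (T : Type) (A B C : set T).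

Lemma mu_balanced : balanced A B C -> mu A B C = A `&` B.
Proof. by move=> [bal1 bal2]; rewrite /mu -bal2 -bal1 !setUid. Qed.

Lemma mu_sub_balanced : balanced A B C -> mu A B C `<=` B.
Proof. by move=> /mu_balanced ->; exact: subIsetr. Qed.

Lemma mu_subU : mu A B C `<=` B `|` C.
Proof. by move=> x [[[_ ?]|[_ ?]]|[? _]]; [left | right | left]. Qed.

Lemma balanced_eqI : balanced A B C -> B `<=` A -> B = A `&` C.
Proof. by move=> [<- _] BA; rewrite setIidr. Qed.

Lemma inS_finite_C : inS (A, B, C) -> finite_set B -> finite_set C.
Proof.
move=> [_ _ _ bal fCm] fB.
apply: (@sub_finite_set _ _ ((C `\` mu A B C) `|` B)); last by rewrite finite_setU.
move=> x Cx; have [mx|nmx] := pselect (mu A B C x); last by left.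
by right; exact: mu_sub_balanced.
Qed.

Lemma inS_notB0_finite : inS (A, B, C) -> ~ inB0 (A, B, C) -> B `<=` A ->
  finite_set C /\ finite_set (~` A).
Proof.
move=> SABC nB0 BA; have [coA _ coC bal _] := SABC.
have nsim : ~ simF A C.
  move=> sim; apply: nB0; exists A, C; split=> //.
  by rewrite -(balanced_eqI bal BA).
case: coA => [fA|fnA].
  have fC : finite_set C by apply: inS_finite_C => //; exact: sub_finite_set fA.
  by exfalso; apply: nsim; left.
case: coC => [//|fnC].
by exfalso; apply: nsim; right.
Qed.

End BalancedTriples.

Lemma joinS_top_cover (T : Type) (A B C A' B' C' : set T) :
  joinS (A, B, C) (A', B', C') = topS T ->
  [set: T] `<=` (B `|` B') `|` (C `|` C').
Proof.
by case=> _ <- _ x [?|mx]; [left | exact: mu_subU mx].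
Qed.

Theorem lemma5p4 (T : Type) (hT : infinite_set [set: T])
  (A B C A' B' C' : set T) :
  inS (A, B, C) -> ~ inB0 (A, B, C) ->
  complS (A, B, C) (A', B', C') ->
  B `<=` A -> ~ (B' `<=` A').
Proof.
move=> SABC nB0 [SABC' meet join] BA B'A'.
have [fC fnA] := inS_notB0_finite SABC nB0 BA.
have bal : balanced A B C by case: SABC.
have fB : finite_set B.
  by apply: sub_finite_set fC; rewrite (balanced_eqI bal BA); exact: subIsetr.
have fB' : finite_set B'.
  case: meet => AA' _ _; apply: sub_finite_set fnA => x B'x Ax.
  have : (A `&` A') x by split=> //; exact: B'A'.
  by rewrite AA'.
have fC' := inS_finite_C SABC' fB'.
apply: hT; apply: sub_finite_set (joinS_top_cover join) _.
by rewrite !finite_setU.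
Qed.
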